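(* Let $a_{21}^0(u)=45u+608u^3-512u^5+16u(28u^2-3)\cos4u+3u\cos8u+12\sin4u-432u^2\sin4u+256u^4\sin4u-6\sin8u$. Then $a_{21}^0(u)<0$ for all $u>0$. *)

From Stdlib Require Import Reals.
Open Scope R_scope.

Definition a21_0 (u : R) : R :=
  45*u + 608*u^3 - 512*u^5 + 16*u*(28*u^2 - 3)*cos (4*u) + 3*u*cos (8*u)
  + 12*sin (4*u) - 432*u^2*sin (4*u) + 256*u^4*sin (4*u) - 6*sin (8*u).

From Stdlib Require Import Reals Lra QArith Qreals Qround List.
Import ListNotations.
Open Scope R_scope.

(* With x = 4u one has 2 a21_0(u) = G(x, cos x, sin x, cos 2x, sin 2x), where G is a
   polynomial that is affine in each of its last four arguments.  For x > 8 the bounds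
   |cos|, |sin| <= 1 suffice, the term -x^5 dominating.  For 0 < x <= 8, cos and sin are
   enclosed between consecutive Taylor polynomials (which alternate around them on
   [0, oo)); by multi-affinity it is then enough that each of the 16 polynomials obtained
   by substituting these enclosures for the trigonometric arguments is negative on
   (0, 8].  These polynomials are divisible by x^15, as a21_0 has a zero of order 15 at 0,
   and the quotients are certified negative by interval Horner evaluation and bisection,
   run by [vm_compute]. *)

Lemma Q2R_int (z : Z) : Q2R (z # 1) = IZR z.
Proof. unfold Q2R; simpl; field. Qed.

Lemma Q2R_Qred (q : Q) : Q2R (Qred q) = Q2R q.
Proof. apply Qeq_eqR, Qred_correct. Qed.

Lemma Q2R_nonneg_of_Qle_bool (q : Q) : Qle_bool 0 q = true -> 0 <= Q2R q.
Proof. intro H; apply Qle_bool_iff, Qle_Rle in H; rewrite Q2R_int in H; exact H. Qed.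

Lemma Q2R_neg_of_Qle_bool (q : Q) : Qle_bool 0 q = false -> Q2R q < 0.
Proof.
  intro H.
  assert (Hq : (q < 0)%Q).
  { apply Qnot_le_lt; intro Hq; apply Qle_bool_iff in Hq; congruence. }
  apply Qlt_Rlt in Hq; rewrite Q2R_int in Hq; exact Hq.
Qed.

(* Coefficient lists, constant term first.  Operations reduce their coefficients with
   [Qred] to keep the numbers small under [vm_compute]. *)
Fixpoint peval (p : list Q) (x : R) : R :=
  match p with
  | [] => 0
  | a :: p' => Q2R a + x * peval p' x
  end.

Fixpoint padd (p q : list Q) : list Q :=
  match p, q with
  | [], _ => q
  | _, [] => p
  | a :: p', b :: q' => Qred (a + b) :: padd p' q'
  end.

Definition pscale (c : Q) (p : list Q) : list Q := map (fun a => Qred (c * a)) p.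

Definition popp (p : list Q) : list Q := map Qopp p.

Fixpoint pmul (p q : list Q) : list Q :=
  match p with
  | [] => []
  | a :: p' => padd (pscale a q) (0%Q :: pmul p' q)
  end.

Fixpoint pdilate (k : Q) (p : list Q) : list Q :=
  match p with
  | [] => []
  | a :: p' => a :: pscale k (pdilate k p')
  end.

Lemma peval_add p q x : peval (padd p q) x = peval p x + peval q x.
Proof.
  revert q; induction p as [|a p IH]; intros [|b q]; cbn [padd peval]; try ring.
  rewrite Q2R_Qred, Q2R_plus, IH; ring.
Qed.

Lemma peval_scale c p x : peval (pscale c p) x = Q2R c * peval p x.
Proof.
  unfold pscale; induction p as [|a p IH]; cbn [peval map]; try ring.
  rewrite Q2R_Qred, Q2R_mult, IH; ring.
Qed.

Lemma peval_opp p x : peval (popp p) x = - peval p x.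
Proof.
  unfold popp; induction p as [|a p IH]; cbn [peval map]; try ring.
  rewrite Q2R_opp, IH; ring.
Qed.

Lemma peval_mul p q x : peval (pmul p q) x = peval p x * peval q x.
Proof.
  induction p as [|a p IH]; cbn [peval pmul]; try ring.
  rewrite peval_add, peval_scale; cbn [peval]; rewrite IH, Q2R_int; ring.
Qed.

Lemma peval_dilate k p x : peval (pdilate k p) x = peval p (Q2R k * x).
Proof.
  induction p as [|a p IH]; cbn [peval pdilate]; try ring.
  rewrite peval_scale, IH; ring.
Qed.

(** * Antiderivatives and Taylor polynomials of cos and sin *)

Fixpoint pint_from (k : nat) (p : list Q) : list Q :=
  match p with
  | [] => []
  | a :: p' => Qred (a / inject_Z (Z.of_nat k)) :: pint_from (S k) p'
  end.

Definition pint (p : list Q) : list Q := 0%Q :: pint_from 1 p.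

Lemma derivable_pint_from p : forall j x,
  derivable_pt_lim (fun y => y ^ S j * peval (pint_from (S j) p) y) x (x ^ j * peval p x).
Proof.
  induction p as [|a p IH]; intros j x; cbn [pint_from peval].
  - apply (derivable_pt_lim_ext (fun _ => 0)); [intro; ring|].
    replace (x ^ j * 0) with 0 by ring; apply derivable_pt_lim_const.
  - set (c := Q2R (Qred (a / inject_Z (Z.of_nat (S j))))).
    assert (Hc : c * INR (S j) = Q2R a).
    { assert (Hn : INR (S j) <> 0) by (apply not_0_INR; discriminate).
      assert (Hk : Q2R (inject_Z (Z.of_nat (S j))) = INR (S j)).
      { unfold inject_Z; rewrite Q2R_int, INR_IZR_INZ; reflexivity. }
      unfold c; rewrite Q2R_Qred, Q2R_div, Hk; [field; exact Hn|].
      intro H0; apply Qeq_eqR in H0; rewrite Hk, Q2R_int in H0; exact (Hn H0). }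
    apply (derivable_pt_lim_ext
      (fun y => c * y ^ S j + y ^ S (S j) * peval (pint_from (S (S j)) p) y));
      [intro y; cbn [pow]; ring|].
    replace (x ^ j * (Q2R a + x * peval p x))
      with (c * (INR (S j) * x ^ pred (S j)) + x ^ S j * peval p x)
      by (rewrite <- Hc; cbn [pow pred]; ring).
    apply derivable_pt_lim_plus; [|apply IH].
    apply derivable_pt_lim_scal, derivable_pt_lim_pow.
Qed.

Lemma derivable_pint p x : derivable_pt_lim (peval (pint p)) x (peval p x).
Proof.
  apply (derivable_pt_lim_ext (fun y => y ^ 1 * peval (pint_from 1 p) y)).
  - intro y; unfold pint; cbn [peval]; rewrite Q2R_int; ring.
  - replace (peval p x) with (x ^ 0 * peval p x) by ring; apply (derivable_pint_from p 0).
Qed.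

Lemma peval_pint_0 p : peval (pint p) 0 = 0.
Proof. unfold pint; cbn [peval]; rewrite Q2R_int; ring. Qed.

Fixpoint cos_taylor (n : nat) : list Q :=
  match n with
  | O => [1%Q]
  | S m => padd [1%Q] (popp (pint (pint (cos_taylor m))))
  end.

Definition sin_taylor (n : nat) : list Q := pint (cos_taylor n).

Lemma deriv_nonneg_le (f f' : R -> R) (a b : R) :
  (forall c, a <= c <= b -> derivable_pt_lim f c (f' c)) ->
  (forall c, a <= c <= b -> 0 <= f' c) -> a <= b -> f a <= f b.
Proof.
  intros Hd Hpos Hab; destruct (Req_dec a b) as [<-|Hne]; [lra|].
  destruct (MVT_cor2 f f' a b) as [c [Hc Hca]]; [lra|exact Hd|].
  assert (0 <= f' c) by (apply Hpos; lra); nra.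
Qed.

Lemma signed_error_step (p q f g : R -> R) (s : R) :
  (forall x, derivable_pt_lim p x (q x)) -> (forall x, derivable_pt_lim f x (g x)) ->
  p 0 = f 0 -> (forall x, 0 <= x -> 0 <= s * (q x - g x)) ->
  forall x, 0 <= x -> 0 <= s * (p x - f x).
Proof.
  intros Hp Hf H0 Hqg x Hx.
  replace 0 with (s * (p 0 - f 0)) at 1 by (rewrite H0; ring).
  apply (deriv_nonneg_le (fun y => s * (p y - f y)) (fun y => s * (q y - g y))); auto.
  - intros c _; apply derivable_pt_lim_scal, derivable_pt_lim_minus; auto.
  - intros c Hc; apply Hqg; lra.
Qed.

Lemma sin_taylor_error_of_cos n :
  (forall x, 0 <= x -> 0 <= (-1) ^ n * (peval (cos_taylor n) x - cos x)) ->
  forall x, 0 <= x -> 0 <= (-1) ^ n * (peval (sin_taylor n) x - sin x).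
Proof.
  apply signed_error_step; [intro; apply derivable_pint | exact derivable_pt_lim_sin |].
  unfold sin_taylor; rewrite peval_pint_0, sin_0; reflexivity.
Qed.

Lemma cos_taylor_error n x : 0 <= x -> 0 <= (-1) ^ n * (peval (cos_taylor n) x - cos x).
Proof.
  revert x; induction n as [|n IH]; intros x Hx.
  - cbn [cos_taylor peval pow]; rewrite Q2R_int; pose proof (COS_bound x); lra.
  - apply (signed_error_step _ (fun y => - peval (sin_taylor n) y) _ (fun y => - sin y));
      auto.
    + intro y; apply (derivable_pt_lim_ext (fun z => 1 - peval (pint (sin_taylor n)) z)).
      * intro z; cbn [cos_taylor]; rewrite peval_add, peval_opp; cbn [peval].
        rewrite Q2R_int; fold (sin_taylor n); ring.
      * replace (- peval (sin_taylor n) y) with (0 - peval (sin_taylor n) y) by ring.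
        apply (derivable_pt_lim_minus (fun _ => 1));
          [apply derivable_pt_lim_const | apply derivable_pint].
    + exact derivable_pt_lim_cos.
    + cbn [cos_taylor]; rewrite peval_add, peval_opp, cos_0; cbn [peval].
      unfold sin_taylor; rewrite peval_pint_0, !Q2R_int; ring.
    + intros y Hy; replace ((-1) ^ S n * (- peval (sin_taylor n) y - - sin y))
        with ((-1) ^ n * (peval (sin_taylor n) y - sin y)) by (cbn [pow]; ring).
      apply (sin_taylor_error_of_cos n IH y Hy).
Qed.

Lemma cos_sin_taylor_error n x : 0 <= x ->
  0 <= (-1) ^ n * (peval (cos_taylor n) x - cos x) /\
  0 <= (-1) ^ n * (peval (sin_taylor n) x - sin x).
Proof.
  intro Hx; split; [|apply sin_taylor_error_of_cos]; auto using cos_taylor_error.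
Qed.

(** * Certified negativity of a polynomial on an interval *)

(* Interval Horner scheme for [0 <= lo <= x <= hi]: only upper bounds are needed, since
   [v <= u] gives [x * v <= hi * u] or [x * v <= lo * u] according to the sign of [u]. *)
Fixpoint horner_upper (p : list Q) (lo hi : Q) : Q :=
  match p with
  | [] => 0
  | a :: p' =>
      let u := horner_upper p' lo hi in
      Qred (a + (if Qle_bool 0 u then hi * u else lo * u))
  end.

Lemma horner_upper_correct p lo hi x : 0 <= Q2R lo -> Q2R lo <= x <= Q2R hi ->
  peval p x <= Q2R (horner_upper p lo hi).
Proof.
  intros Hlo Hx; induction p as [|a p IH]; cbn [horner_upper peval].
  - rewrite Q2R_int; lra.
  - rewrite Q2R_Qred, Q2R_plus.
    destruct (Qle_bool 0 (horner_upper p lo hi)) eqn:Hu; rewrite Q2R_mult.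
    + apply Q2R_nonneg_of_Qle_bool in Hu; nra.
    + apply Q2R_neg_of_Qle_bool in Hu; nra.
Qed.

(* The test is an [if] rather than [||] so that [vm_compute] bisects only where needed. *)
Fixpoint neg_by_bisection (n : nat) (p : list Q) (lo hi : Q) : bool :=
  if Qle_bool 0 (horner_upper p lo hi) then
    match n with
    | O => false
    | S m =>
        let mid := Qred ((lo + hi) / 2) in
        neg_by_bisection m p lo mid && neg_by_bisection m p mid hi
    end
  else true.

Lemma Q2R_midpoint lo hi : Q2R (Qred ((lo + hi) / 2)) = (Q2R lo + Q2R hi) / 2.
Proof.
  rewrite Q2R_Qred, Q2R_div, Q2R_plus, Q2R_int; [reflexivity|].
  intro H; apply Qeq_eqR in H; rewrite !Q2R_int in H; lra.
Qed.

Lemma neg_by_bisection_correct n : forall p lo hi x, neg_by_bisection n p lo hi = true ->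
  0 <= Q2R lo -> Q2R lo <= x <= Q2R hi -> peval p x < 0.
Proof.
  induction n as [|n IH]; intros p lo hi x Hc Hlo Hx; cbn [neg_by_bisection] in Hc;
    destruct (Qle_bool 0 (horner_upper p lo hi)) eqn:Hu;
    try (apply Q2R_neg_of_Qle_bool in Hu; pose proof (horner_upper_correct p lo hi x Hlo Hx);
         lra);
    [discriminate|].
  apply andb_prop in Hc as [Hl Hr].
  destruct (Rle_dec x (Q2R (Qred ((lo + hi) / 2)))) as [Hm|Hm];
    rewrite Q2R_midpoint in Hm.
  - apply (IH p lo _ x Hl Hlo); rewrite Q2R_midpoint; lra.
  - apply (IH p _ hi x Hr); rewrite Q2R_midpoint; lra.
Qed.

Fixpoint starts_with_zeros (n : nat) (p : list Q) : bool :=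
  match n, p with
  | O, _ | _, [] => true
  | S m, a :: p' => Qeq_bool a 0 && starts_with_zeros m p'
  end.

Lemma peval_starts_with_zeros n : forall p x, starts_with_zeros n p = true ->
  peval p x = x ^ n * peval (skipn n p) x.
Proof.
  induction n as [|n IH]; intros [|a p] x H; cbn [skipn peval pow] in *; try ring.
  apply andb_prop in H as [Ha Hp].
  apply Qeq_bool_iff, Qeq_eqR in Ha.
  rewrite Ha, Q2R_int, (IH p x Hp); ring.
Qed.

Fixpoint coeffs_le (p q : list Q) : bool :=
  match p, q with
  | [], [] => true
  | a :: p', b :: q' => Qle_bool a b && coeffs_le p' q'
  | _, _ => false
  end.

Lemma peval_le_of_coeffs_le p : forall q x, coeffs_le p q = true -> 0 <= x ->
  peval p x <= peval q x.
Proof.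
  induction p as [|a p IH]; intros [|b q] x H Hx; cbn [coeffs_le peval] in *;
    try discriminate; try lra.
  apply andb_prop in H as [Hab Hpq].
  apply Qle_bool_iff, Qle_Rle in Hab.
  specialize (IH q x Hpq Hx); nra.
Qed.

(* Rounds coefficient k up to a multiple of 2^-(k0 + 3k), keeping the rationals of the
   bisection small (the factor 2^3 per degree matches x <= 8).  That this is a rounding
   up is not proved but checked by [coeffs_le]. *)
Fixpoint round_up_from (k : Z) (p : list Q) : list Q :=
  match p with
  | [] => []
  | a :: p' =>
      (Qceiling (a * inject_Z (2 ^ k)) # Z.to_pos (2 ^ k)) :: round_up_from (k + 3) p'
  end.

Definition G (x c s c2 s2 : R) : R :=
  (45/2*x + 19*x^3 - x^5) + (14*x^3 - 24*x)*c + (24 - 54*x^2 + 2*x^4)*s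
  + 3/2*x*c2 - 12*s2.

Lemma a21_0_G u :
  a21_0 u = G (4*u) (cos (4*u)) (sin (4*u)) (cos (2*(4*u))) (sin (2*(4*u))) / 2.
Proof. unfold a21_0, G; replace (2*(4*u)) with (8*u) by ring; field. Qed.

Lemma G_neg_large x c s c2 s2 : 8 < x -> -1 <= c <= 1 -> -1 <= s <= 1 ->
  -1 <= c2 <= 1 -> -1 <= s2 <= 1 -> G x c s c2 s2 < 0.
Proof.
  intros Hx Hc Hs Hc2 Hs2; unfold G.
  assert (64 < x^2) by nra.
  assert (0 <= 14*x^3 - 24*x) by nra.
  assert (0 <= 24 - 54*x^2 + 2*x^4) by nra.
  assert ((14*x^3 - 24*x) * c <= 14*x^3 - 24*x) by nra.
  assert ((24 - 54*x^2 + 2*x^4) * s <= 24 - 54*x^2 + 2*x^4) by nra.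
  assert (3/2*x*c2 <= 3/2*x) by nra.
  assert (8 * x^4 <= x^5) by nra.
  assert (8 * x^3 <= x^4) by nra.
  assert (0 < x^3) by nra.
  nra.
Qed.

Lemma affine_neg_between (g : R -> R) (l u t : R) :
  (forall y, g y = (g 1 - g 0) * y + g 0) -> l <= t <= u -> g l < 0 -> g u < 0 -> g t < 0.
Proof.
  intros Hg Ht Hl Hu; rewrite Hg in Hl, Hu |- *.
  destruct (Rle_lt_dec 0 (g 1 - g 0)); nra.
Qed.

Lemma G_neg_of_corners x c s c2 s2 cl cu sl su c2l c2u s2l s2u :
  cl <= c <= cu -> sl <= s <= su -> c2l <= c2 <= c2u -> s2l <= s2 <= s2u ->
  (forall c' s' c2' s2', (c' = cl \/ c' = cu) -> (s' = sl \/ s' = su) ->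
     (c2' = c2l \/ c2' = c2u) -> (s2' = s2l \/ s2' = s2u) -> G x c' s' c2' s2' < 0) ->
  G x c s c2 s2 < 0.
Proof.
  intros Hc Hs Hc2 Hs2 Hcorner.
  assert (H3 : forall c' s' c2', (c' = cl \/ c' = cu) -> (s' = sl \/ s' = su) ->
            (c2' = c2l \/ c2' = c2u) -> G x c' s' c2' s2 < 0).
  { intros c' s' c2' ? ? ?; apply (affine_neg_between (fun y => G x c' s' c2' y) s2l s2u);
      auto; intro; unfold G; ring. }
  assert (H2 : forall c' s', (c' = cl \/ c' = cu) -> (s' = sl \/ s' = su) ->
            G x c' s' c2 s2 < 0).
  { intros c' s' ? ?; apply (affine_neg_between (fun y => G x c' s' y s2) c2l c2u);
      auto; intro; unfold G; ring. }
  assert (H1 : forall c', (c' = cl \/ c' = cu) -> G x c' s c2 s2 < 0).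
  { intros c' ?; apply (affine_neg_between (fun y => G x c' y c2 s2) sl su);
      auto; intro; unfold G; ring. }
  apply (affine_neg_between (fun y => G x y s c2 s2) cl cu); auto; intro; unfold G; ring.
Qed.

Definition G_poly (c s c2 s2 : list Q) : list Q :=
  padd [0; 45#2; 0; 19; 0; -1]%Q
    (padd (pmul [0; -24; 0; 14]%Q c)
      (padd (pmul [24; 0; -54; 0; 2]%Q s)
        (padd (pmul [0; 3#2]%Q c2) (pscale (-12) s2)))).

Lemma peval_G_poly c s c2 s2 x :
  peval (G_poly c s c2 s2) x = G x (peval c x) (peval s x) (peval c2 x) (peval s2 x).
Proof.
  unfold G_poly, G; rewrite !peval_add, !peval_mul, peval_scale; cbn [peval].
  unfold Q2R; simpl; field.
Qed.

Definition G_neg_certificate (c s c2 s2 : list Q) : bool :=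
  let p := G_poly c s c2 s2 in
  let q := skipn 15 p in
  let r := round_up_from 64 q in
  starts_with_zeros 15 p && coeffs_le q r && neg_by_bisection 14 r 0 8.

Lemma G_neg_certificate_correct c s c2 s2 x : G_neg_certificate c s c2 s2 = true ->
  0 < x <= 8 -> G x (peval c x) (peval s x) (peval c2 x) (peval s2 x) < 0.
Proof.
  intros H Hx; unfold G_neg_certificate in H.
  apply andb_prop in H as [H Hneg]; apply andb_prop in H as [Hzeros Hle].
  rewrite <- peval_G_poly, (peval_starts_with_zeros _ _ x Hzeros).
  assert (Hq : peval (skipn 15 (G_poly c s c2 s2)) x < 0).
  { eapply Rle_lt_trans; [apply (peval_le_of_coeffs_le _ _ x Hle); lra|].
    apply (neg_by_bisection_correct _ _ _ _ x Hneg); rewrite !Q2R_int; lra. }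
  assert (0 < x ^ 15) by (apply pow_lt; lra).
  nra.
Qed.

Lemma G_neg_small x : 0 < x <= 8 -> G x (cos x) (sin x) (cos (2*x)) (sin (2*x)) < 0.
Proof.
  intro Hx.
  destruct (cos_sin_taylor_error 20 x) as [Hc20 Hs20]; [lra|].
  destruct (cos_sin_taylor_error 21 x) as [Hc21 Hs21]; [lra|].
  destruct (cos_sin_taylor_error 20 (2*x)) as [Hc20' Hs20']; [lra|].
  destruct (cos_sin_taylor_error 21 (2*x)) as [Hc21' Hs21']; [lra|].
  replace 2 with (Q2R 2) in Hc20', Hs20', Hc21', Hs21' by apply Q2R_int.
  rewrite <- !peval_dilate in Hc20', Hs20', Hc21', Hs21'.
  replace (Q2R 2) with 2 in * by (symmetry; apply Q2R_int).
  replace ((-1) ^ 20) with 1 in * by ring.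
  replace ((-1) ^ 21) with (-1) in * by ring.
  apply (G_neg_of_corners x _ _ _ _
    (peval (cos_taylor 21) x) (peval (cos_taylor 20) x)
    (peval (sin_taylor 21) x) (peval (sin_taylor 20) x)
    (peval (pdilate 2 (cos_taylor 21)) x) (peval (pdilate 2 (cos_taylor 20)) x)
    (peval (pdilate 2 (sin_taylor 21)) x) (peval (pdilate 2 (sin_taylor 20)) x));
    try lra.
  intros c s c2 s2 Hc Hs Hc2 Hs2.
  destruct Hc as [-> | ->], Hs as [-> | ->], Hc2 as [-> | ->], Hs2 as [-> | ->];
    (apply G_neg_certificate_correct; [vm_compute; reflexivity | exact Hx]).
Qed.

Theorem lemma5p4 : forall u : R, 0 < u -> a21_0 u < 0.
Proof.
  intros u Hu; rewrite a21_0_G.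
  assert (G (4*u) (cos (4*u)) (sin (4*u)) (cos (2*(4*u))) (sin (2*(4*u))) < 0); [|lra].
  destruct (Rle_lt_dec (4*u) 8).
  - apply G_neg_small; lra.
  - apply G_neg_large; auto using COS_bound, SIN_bound.
Qed.
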